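(* Let $X_1,\dots,X_n$ be features and $Y$ a target that is not a.s. constant, let $k\in\{1,\dots,n\}$ and let $f$ be any function on the range of $X_k$. Let $\mathrm{FI}(k)$ be the Berkelmans–Pries feature importance of feature $k$ in the dataset $(X_1,\dots,X_n)$ and $\mathrm{FI}'(k)$ that of feature $k$ in the dataset $(X_1,\dots,X_{k-1},f(X_k),X_{k+1},\dots,X_n)$. Then $\mathrm{FI}'(k)\le\mathrm{FI}(k)$.
   Context: All random variables are discrete with finite support and defined on a common probability space. For discrete random variables (or random vectors) $X$ and $Y$, define $$\mathrm{UD}(X,Y):=\sum_x p_X(x)\sum_y \bigl|p_{Y\mid X=x}(y)-p_Y(y)\bigr|,$$ and, when $Y$ is not almost surely constant, $\mathrm{Dep}(X,Y):=\mathrm{UD}(X,Y)/\mathrm{UD}(Y,Y)$. Given features $X_1,\dots,X_n$ with index set $\mathcal{F}=\{1,\dots,n\}$ and $S\subseteq\mathcal{F}$, write $X_S=(X_i)_{i\in S}$ ($X_\emptyset$ constant) and $\mathrm{Dep}(S,Y):=\mathrm{Dep}(X_S,Y)$. The Berkelmans–Pries feature importance of feature $i$ in this dataset is $$\mathrm{FI}(i):=\sum_{S\subseteq\mathcal{F}\setminus\{i\}}\frac{|S|!\,(n-|S|-1)!}{n!}\bigl(\mathrm{Dep}(S\cup\{i\},Y)-\mathrm{Dep}(S,Y)\bigr).$$ *)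

From HB Require Import structures.
From mathcomp Require Import all_boot all_order all_algebra.
Set Implicit Arguments. Unset Strict Implicit. Unset Printing Implicit Defensive.
Import Order.TTheory GRing.Theory Num.Theory.
Local Open Scope ring_scope.

Section Defs.
Variables (R : realFieldType) (Omega : finType) (P : Omega -> R).

Definition prob (A : pred Omega) : R := \sum_(w | A w) P w.

Definition range_rv (A : eqType) (X : Omega -> A) : seq A :=
  undup [seq X w | w <- enum Omega].

(* UD(X,Y) = sum_x p_X(x) sum_y |p_{Y|X=x}(y) - p_Y(y)|,
   with p_{Y|X=x}(y) = P(X=x,Y=y)/P(X=x).  Values x with p_X(x)=0 and
   values y outside the range contribute 0. *)
Definition UD (A B : eqType) (X : Omega -> A) (Y : Omega -> B) : R :=
  \sum_(x <- range_rv X)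
     prob (fun w => X w == x) *
     \sum_(y <- range_rv Y)
        `| prob (fun w => (X w == x) && (Y w == y)) / prob (fun w => X w == x)
           - prob (fun w => Y w == y) |.

Definition Dep (A B : eqType) (X : Omega -> A) (Y : Omega -> B) : R :=
  UD X Y / UD Y Y.

End Defs.

Record feature (Omega : Type) := Feature { fty : eqType; frv : Omega -> fty }.
Arguments Feature {Omega fty} frv.

(* X_S as a random vector: the list of tagged values (i, X_i) for i in S
   (enumerated in increasing order); X_emptyset is constant [::]. *)
Definition XS (Omega : Type) (n : nat) (D : 'I_n -> feature Omega)
  (S : {set 'I_n}) (w : Omega) : seq {i : 'I_n & fty (D i)} :=
  [seq Tagged (fun i => fty (D i)) (frv (D i) w) | i <- enum S].

Definition DepS (R : realFieldType) (Omega : finType) (P : Omega -> R)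
  (n : nat) (D : 'I_n -> feature Omega) (B : eqType) (Y : Omega -> B)
  (S : {set 'I_n}) : R :=
  Dep P (XS D S) Y.

Definition FI (R : realFieldType) (Omega : finType) (P : Omega -> R)
  (n : nat) (D : 'I_n -> feature Omega) (B : eqType) (Y : Omega -> B)
  (i : 'I_n) : R :=
  \sum_(S : {set 'I_n} | i \notin S)
     ((#|S|`! * (n - #|S| - 1)`!)%:R / (n`!)%:R) *
     (DepS P D Y (i |: S) - DepS P D Y S).

Definition replace_feature (Omega : Type) (n : nat) (D : 'I_n -> feature Omega)
  (k : 'I_n) (U : eqType) (f : fty (D k) -> U) : 'I_n -> feature Omega :=
  fun i => if i == k then Feature (fun w => f (frv (D k) w)) else D i.
Arguments replace_feature {Omega n} D k {U} f.
Arguments FI {R Omega} P {n} D {B} Y i.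

(* Writing p_w for the probability weights and
   h_y(w) := (1[Y w = y] - P(Y = y)) * p_w, the p_X(x)-weighted conditional
   deviation telescopes into
       UD(X,Y) = sum_y sum_x | sum_{w : X w = x} h_y(w) |.
   If X' is a function of X, every level set of X' is a disjoint union of
   level sets of X, so by the triangle inequality UD(X',Y) <= UD(X,Y) and hence
   Dep(X',Y) <= Dep(X,Y) (the normalising factor UD(Y,Y) is shared and >= 0).
   In the modified dataset, X'_S is a function of X_S for every coalition S,
   and when k is not in S the two random vectors determine each other.  Thus
   in each Shapley term Dep'(S+k) <= Dep(S+k) while Dep'(S) = Dep(S), and the
   coefficients are nonnegative. *)
From HB Require Import structures.
From mathcomp Require Import all_boot all_order all_algebra.
Import Order.TTheory GRing.Theory Num.Theory.
Local Open Scope ring_scope.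
Set Implicit Arguments. Unset Strict Implicit.

Section Coarsening.
Variables (R : realFieldType) (Omega : finType) (P : Omega -> R).
Hypothesis P_ge0 : forall w, 0 <= P w.

Definition factors_through (A A' : eqType) (X' : Omega -> A') (X : Omega -> A) :=
  forall w1 w2, X w1 = X w2 -> X' w1 = X' w2.

Lemma mem_range_rv (A : eqType) (X : Omega -> A) w : X w \in range_rv X.
Proof. by rewrite /range_rv mem_undup; apply: map_f; rewrite mem_enum. Qed.

Lemma range_rvP (A : eqType) (X : Omega -> A) x :
  x \in range_rv X -> exists w, X w = x.
Proof. by rewrite /range_rv mem_undup => /mapP [w _ ->]; exists w. Qed.

Lemma sum_by_levels (A : eqType) (X : Omega -> A) (p : pred Omega) (h : Omega -> R) :
  \sum_(w | p w) h w = \sum_(x <- range_rv X) \sum_(w | (X w == x) && p w) h w.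
Proof.
under [RHS]eq_bigr do rewrite big_mkcond /=.
rewrite exchange_big /= big_mkcond /=; apply: eq_bigr => w _.
rewrite (bigD1_seq (X w)) ?mem_range_rv ?undup_uniq //= eqxx big1_seq ?addr0 //.
by move=> x /andP [xNXw _]; rewrite eq_sym (negbTE xNXw).
Qed.

(* If X' factors through X, a level set of X lies inside a single level set
   of X', so splitting it along X' leaves just one nonzero piece. *)
Lemma level_in_one_level (A A' : eqType) (X : Omega -> A) (X' : Omega -> A')
  (X'X : factors_through X' X) (h : Omega -> R) x : x \in range_rv X ->
  \sum_(x' <- range_rv X') `|\sum_(w | (X w == x) && (X' w == x')) h w|
  = `|\sum_(w | X w == x) h w|.
Proof.
case/range_rvP => w0 <-{x}.
have X'w : forall w, X w = X w0 -> X' w = X' w0 by move=> w; apply: X'X.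
rewrite (bigD1_seq (X' w0)) ?mem_range_rv ?undup_uniq //= [X in _ + X]big1_seq ?addr0.
  apply: congr1; apply: eq_bigl => w.
  by case: (X w =P X w0) => [/X'w ->|_]; rewrite ?eqxx.
move=> x' /andP [x'N _]; rewrite big_pred0 ?normr0 // => w.
case: (X w =P X w0) => [/X'w ->|//]; by rewrite eq_sym (negbTE x'N).
Qed.

(* Triangle inequality on level sets: the total mass |.| of the level sums
   of h can only decrease when passing to a coarser random variable. *)
Lemma level_norm_sum_coarsen (A A' : eqType) (X : Omega -> A) (X' : Omega -> A')
  (X'X : factors_through X' X) (h : Omega -> R) :
  \sum_(x' <- range_rv X') `|\sum_(w | X' w == x') h w|
  <= \sum_(x <- range_rv X) `|\sum_(w | X w == x) h w|.
Proof.
under eq_bigr do rewrite (sum_by_levels X).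
apply: le_trans (ler_sum _ (fun x' _ => ler_norm_sum _ _ _)) _.
rewrite exchange_big /= big_seq [X in _ <= X]big_seq; apply: ler_sum => x xX.
by rewrite (level_in_one_level X'X h xX).
Qed.

(* Clearing the denominator in p_X(x) |p_{Y|X=x}(y) - p_Y(y)|. *)
Lemma mul_norm_cond (a b c : R) :
  0 <= a -> (a = 0 -> b = 0) -> a * `|b / a - c| = `|b - a * c|.
Proof.
move=> a_ge0 ab; have [a0|aN0] := eqVneq a 0.
  by rewrite a0 (ab a0) !(mul0r, sub0r, subr0, normrN, normr0).
by rewrite -{1}(ger0_norm a_ge0) -normrM mulrBr mulrCA divff // mulr1.
Qed.

Definition centred_mass (B : eqType) (Y : Omega -> B) (y : B) (w : Omega) : R :=
  ((Y w == y)%:R - prob P (fun w => Y w == y)) * P w.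

Lemma UD_levels (A B : eqType) (X : Omega -> A) (Y : Omega -> B) :
  UD P X Y = \sum_(x <- range_rv X) \sum_(y <- range_rv Y)
     `|\sum_(w | X w == x) centred_mass Y y w|.
Proof.
apply: eq_bigr => x _; rewrite mulr_sumr; apply: eq_bigr => y _.
rewrite mul_norm_cond; last 2 first.
- exact: sumr_ge0.
- move=> Px0; apply/le_anti/andP; split; last exact: sumr_ge0.
  rewrite -Px0 /prob [X in _ <= X](bigID (fun w => Y w == y)) /= lerDl.
  exact: sumr_ge0.
apply: congr1; rewrite /centred_mass.
under eq_bigr do rewrite mulrBl.
rewrite sumrB -mulr_sumr mulrC /prob big_mkcondr /=; congr (_ - _).
by apply: eq_bigr => w _; case: (Y w == y); rewrite ?mul1r ?mul0r.
Qed.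

Lemma UD_ge0 (A B : eqType) (X : Omega -> A) (Y : Omega -> B) : 0 <= UD P X Y.
Proof. by rewrite UD_levels; apply: sumr_ge0 => x _; apply: sumr_ge0. Qed.

Lemma UD_coarsen_le (A A' B : eqType) (X : Omega -> A) (X' : Omega -> A')
  (Y : Omega -> B) : factors_through X' X -> UD P X' Y <= UD P X Y.
Proof.
move=> X'X; rewrite !UD_levels exchange_big [X in _ <= X]exchange_big /=.
by apply: ler_sum => y _; apply: level_norm_sum_coarsen.
Qed.

Lemma Dep_coarsen_le (A A' B : eqType) (X : Omega -> A) (X' : Omega -> A')
  (Y : Omega -> B) : factors_through X' X -> Dep P X' Y <= Dep P X Y.
Proof. by move=> X'X; rewrite /Dep ler_wpM2r ?invr_ge0 ?UD_ge0 ?UD_coarsen_le. Qed.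

End Coarsening.

Lemma Tagged_inj (I : eqType) (T_ : I -> eqType) (i : I) (x y : T_ i) :
  Tagged T_ x = Tagged T_ y -> x = y.
Proof.
by move=> eq_xy; have := congr1 (tagged_as (Tagged T_ x)) eq_xy; rewrite !tagged_asE.
Qed.

Lemma XS_eqP (Omega : Type) (n : nat) (D : 'I_n -> feature Omega) S w1 w2 :
  XS D S w1 = XS D S w2 <-> (forall i, i \in S -> frv (D i) w1 = frv (D i) w2).
Proof.
rewrite /XS; split => [/eq_in_map eqS i iS | eqS].
  by have := eqS i; rewrite mem_enum => /(_ iS) /Tagged_inj.
by apply/eq_in_map => i; rewrite mem_enum => iS /=; rewrite eqS.
Qed.

Section ReplaceFeature.
Variables (R : realFieldType) (Omega : finType) (P : Omega -> R).
Hypothesis P_ge0 : forall w, 0 <= P w.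
Variables (n : nat) (D : 'I_n -> feature Omega) (B : eqType) (Y : Omega -> B).
Variables (k : 'I_n) (U : eqType) (f : fty (D k) -> U).

Let D' := replace_feature D k f.

Lemma replace_factors i : factors_through (frv (D' i)) (frv (D i)).
Proof. by rewrite /D' /replace_feature => w1 w2; case: eqP => [->|_] //= ->. Qed.

Lemma replace_other i : i != k -> factors_through (frv (D i)) (frv (D' i)).
Proof. by rewrite /D' /replace_feature => iNk w1 w2; rewrite (negbTE iNk). Qed.

Lemma DepS_replace_le (S : {set 'I_n}) : DepS P D' Y S <= DepS P D Y S.
Proof.
apply: Dep_coarsen_le => // w1 w2 /XS_eqP eqS; apply/XS_eqP => i iS.
exact/replace_factors/eqS.
Qed.

Lemma DepS_replace_notin (S : {set 'I_n}) : k \notin S -> DepS P D' Y S = DepS P D Y S.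
Proof.
move=> kNS; apply/le_anti; rewrite DepS_replace_le /=.
apply: Dep_coarsen_le => // w1 w2 /XS_eqP eqS; apply/XS_eqP => i iS.
by apply/replace_other/eqS => //; apply: contraNneq kNS => <-.
Qed.

End ReplaceFeature.

Theorem mainTheorem12 (R : realFieldType) (Omega : finType) (P : Omega -> R)
  (P_ge0 : forall w, 0 <= P w) (P_sum1 : \sum_(w : Omega) P w = 1)
  (n : nat) (D : 'I_n -> feature Omega) (B : eqType) (Y : Omega -> B)
  (Y_nonconst : ~ (exists y : B, prob P (fun w => Y w == y) = 1))
  (k : 'I_n) (U : eqType) (f : fty (D k) -> U) :
  FI P (replace_feature D k f) Y k <= FI P D Y k.
Proof.
rewrite /FI; apply: ler_sum => S kNS.
apply: ler_wpM2l; first by rewrite divr_ge0 ?ler0n.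
by rewrite (DepS_replace_notin P_ge0 Y f kNS) lerD2r DepS_replace_le.
Qed.
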